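(* Let $(S,\mathcal{S})$ be a measurable space with $\Delta\in\mathcal{S}\otimes\mathcal{S}$ and let $\mathcal{H}\subseteq\mathcal{S}$ be a semiring with $\sigma(\mathcal{H})=\mathcal{S}$. Then $\mathcal{H}$ is self-dissecting.
   Context: $\Delta=\{(x,x)\mid x\in S\}$. For $A\subseteq S$ and, for each $n\in\mathbb{N}$, a family $\{A_{n,k}\mid k\in I_n\}$ of subsets of $S$ with $I_n\subseteq\mathbb{N}$, the sequence $(\{A_{n,k}\mid k\in I_n\})_{n}$ is a dissecting system for $A$ if: (i) for each $n$ the sets $A_{n,k}$, $k\in I_n$, are pairwise disjoint, $\bigcup_{k\in I_n}A_{n,k}\subseteq\bigcup_{k\in I_{n+1}}A_{n+1,k}\subseteq A$, and $\bigcup_{n,k}A_{n,k}=A$; (ii) for any distinct $x,y\in A$ there is $n(x,y)$ such that for all $n\ge n(x,y)$ some $A_{n,k}$ contains exactly one of $x,y$. A nonempty family $\mathcal{E}\subseteq\mathcal{P}(S)$ is self-dissecting if every $A\in\mathcal{E}$ has a dissecting system with $\{A_{n,k}\mid k\in I_n\}\subseteq\mathcal{E}$ for all $n$. *)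

From Stdlib Require Import Arith.

Definition set (T : Type) := T -> Prop.

Definition sigma_algebra {T : Type} (F : set (set T)) : Prop :=
  F (fun _ => False) /\
  (forall A, F A -> F (fun x => ~ A x)) /\
  (forall A : nat -> set T, (forall n, F (A n)) -> F (fun x => exists n, A n x)).

Definition sigma_gen {T : Type} (G : set (set T)) : set (set T) :=
  fun A => forall F : set (set T), sigma_algebra F -> (forall B, G B -> F B) -> F A.

Definition prod_sigma {T U : Type} (F1 : set (set T)) (F2 : set (set U))
  : set (set (T * U)) :=
  sigma_gen (fun R => exists A B, F1 A /\ F2 B /\
                        forall p, R p <-> (A (fst p) /\ B (snd p))).

Definition diagonal (T : Type) : set (T * T) := fun p => fst p = snd p.

Definition semiring {T : Type} (H : set (set T)) : Prop :=
  H (fun _ => False) /\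
  (forall A B, H A -> H B -> H (fun x => A x /\ B x)) /\
  (forall A B, H A -> H B ->
     exists (m : nat) (C : nat -> set T),
       (forall i, i < m -> H (C i)) /\
       (forall i j, i < m -> j < m -> i <> j -> forall x, C i x -> C j x -> False) /\
       (forall x, (A x /\ ~ B x) <-> exists i, i < m /\ C i x)).

Definition dissecting_system {T : Type} (I : nat -> set nat)
  (Af : nat -> nat -> set T) (A : set T) : Prop :=
  (forall n k l, I n k -> I n l -> k <> l -> forall x, Af n k x -> Af n l x -> False) /\
  (forall n x, (exists k, I n k /\ Af n k x) -> exists k, I (S n) k /\ Af (S n) k x) /\
  (forall n k x, I n k -> Af n k x -> A x) /\
  (forall x, A x -> exists n k, I n k /\ Af n k x) /\
  (forall x y, A x -> A y -> x <> y ->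
     exists N, forall n, N <= n ->
       exists k, I n k /\ ((Af n k x /\ ~ Af n k y) \/ (~ Af n k x /\ Af n k y))).

Definition self_dissecting {T : Type} (E : set (set T)) : Prop :=
  (exists A, E A) /\
  forall A, E A -> exists (I : nat -> set nat) (Af : nat -> nat -> set T),
    dissecting_system I Af A /\ (forall n k, I n k -> E (Af n k)).

From Stdlib Require Import Arith Lia Cantor Classical ClassicalEpsilon.

(* 1. Countable determination.  A set A is countably K-determined when some
      sequence of members of K cannot separate points that A separates.  For a
      nonempty K these sets form a sigma-algebra (countably many countable
      families merge into one via Cantor pairing), so they contain sigma(K).
   2. Separation.  The diagonal is then determined by countably many cylinders
      B x S and S x B with B in H; the sides B form a sequence h in H that
      separates the points of S.
   3. Refinement.  A countable partition of A into members of H can be refined,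
      using the semiring axioms on each piece, into one that decides a further
      set B of H (each piece lies inside or outside B).
   4. Refining n times against h 0, ..., h (n-1) gives the level-n partition of
      a given A in H; distinct points of A eventually lie in different pieces,
      so these levels form a dissecting system of A made of members of H. *)

Definition determined_by {U : Type} (g : nat -> set U) (A : set U) : Prop :=
  forall x y, (forall m, g m x <-> g m y) -> (A x <-> A y).

Definition countably_determined {U : Type} (K : set (set U)) (A : set U) : Prop :=
  exists g : nat -> set U, (forall m, K (g m)) /\ determined_by g A.

Definition merge {U : Type} (G : nat -> nat -> set U) (k : nat) : set U :=
  G (fst (Cantor.of_nat k)) (snd (Cantor.of_nat k)).

Lemma merge_pair {U : Type} (G : nat -> nat -> set U) n j :
  merge G (Cantor.to_nat (n, j)) = G n j.
Proof. unfold merge. now rewrite Cantor.cancel_of_to. Qed.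

Lemma determined_by_merge {U : Type} (G : nat -> nat -> set U) (A : set U) n :
  determined_by (G n) A -> determined_by (merge G) A.
Proof.
  intros HA x y Hxy. apply HA. intro j. rewrite <- (merge_pair G n j). apply Hxy.
Qed.

Lemma determined_by_trans {U : Type} (g h : nat -> set U) (A : set U) :
  (forall m, determined_by h (g m)) -> determined_by g A -> determined_by h A.
Proof. intros Hg HA x y Hxy. apply HA. intro m. now apply Hg. Qed.

Lemma countably_determined_of_mem {U : Type} (K : set (set U)) (B : set U) :
  K B -> countably_determined K B.
Proof. intro HB. exists (fun _ => B). split; auto. intros x y Hxy. apply (Hxy 0). Qed.

(* Countable determination is transitive: countably many countable families
   merge into one countable family. *)
Lemma countably_determined_trans {U : Type} (K K' : set (set U)) (A : set U) :
  (forall B, K B -> countably_determined K' B) ->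
  countably_determined K A -> countably_determined K' A.
Proof.
  intros HKK' [g [Hg HA]].
  destruct (choice (fun m G => (forall j, K' (G j)) /\ determined_by G (g m)))
    as [G HG]; [intro m; exact (HKK' _ (Hg m))|].
  exists (merge G). split.
  - intro k. apply HG.
  - apply (determined_by_trans g); [|exact HA].
    intro m. apply (determined_by_merge G _ m). apply HG.
Qed.

Lemma countably_determined_sigma_algebra {U : Type} (K : set (set U)) :
  (exists B, K B) -> sigma_algebra (countably_determined K).
Proof.
  intros [B HB]. split; [|split].
  - exists (fun _ => B). split; auto. intros x y _. tauto.
  - intros A [g [Hg HA]]. exists g. split; auto.
    intros x y Hxy. specialize (HA x y Hxy). tauto.
  - intros A HA.
    destruct (choice (fun n G => (forall j, K (G j)) /\ determined_by G (A n)) HA)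
      as [G HG].
    exists (merge G). split; [intro k; apply HG|].
    intros x y Hxy.
    assert (Hrows : forall n, A n x <-> A n y).
    { intro n. exact (determined_by_merge G (A n) n (proj2 (HG n)) x y Hxy). }
    split; intros [n Hn]; exists n; apply Hrows; exact Hn.
Qed.

Lemma sigma_gen_countably_determined {U : Type} (K : set (set U)) (A : set U) :
  (exists B, K B) -> sigma_gen K A -> countably_determined K A.
Proof.
  intros HK HA. apply HA.
  - now apply countably_determined_sigma_algebra.
  - apply countably_determined_of_mem.
Qed.

Definition cylinders {U : Type} (K : set (set U)) : set (set (U * U)) :=
  fun R => exists B, K B /\
    (R = (fun p => B (fst p)) \/ R = (fun p => B (snd p))).

Definition separates {U : Type} (h : nat -> set U) : Prop :=
  forall x y, (forall m, h m x <-> h m y) -> x = y.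

Lemma countably_determined_cylinder {U : Type} (K : set (set U)) (B : set U) :
  countably_determined K B ->
  countably_determined (cylinders K) (fun p => B (fst p)) /\
  countably_determined (cylinders K) (fun p => B (snd p)).
Proof.
  intros [g [Hg HB]]. split.
  - exists (fun m p => g m (fst p)). split.
    + intro m. exists (g m). auto.
    + intros p q Hpq. exact (HB _ _ Hpq).
  - exists (fun m p => g m (snd p)). split.
    + intro m. exists (g m). auto.
    + intros p q Hpq. exact (HB _ _ Hpq).
Qed.

(* Every measurable rectangle is determined by its two sides, hence by
   countably many cylinders over the generator [H]. *)
Lemma rectangle_countably_determined {U : Type} (SS H : set (set U))
    (A B : set U) (R : set (U * U)) :
  (forall C, SS C -> sigma_gen H C) -> (exists C, H C) ->
  SS A -> SS B -> (forall p, R p <-> (A (fst p) /\ B (snd p))) ->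
  countably_determined (cylinders H) R.
Proof.
  intros Hgen HH HA HB HR.
  apply (countably_determined_trans (cylinders SS)).
  - intros C [D [HD [-> | ->]]];
      apply (countably_determined_cylinder H D);
      apply sigma_gen_countably_determined; auto.
  - exists (fun m => match m with
                     | 0 => fun p => A (fst p)
                     | _ => fun p => B (snd p) end).
    split.
    + intros [|m]; [exists A | exists B]; auto.
    + intros p q Hpq. rewrite (HR p), (HR q).
      pose proof (Hpq 0) as E0. pose proof (Hpq 1) as E1. simpl in E0, E1. tauto.
Qed.

(* A measurable diagonal yields a separating sequence in the generator [H]:
   the diagonal is determined by countably many cylinders [B_m x U], [U x B_m]
   with [B_m] in [H], and the sides [B_m] must separate points. *)
Lemma separating_sequence {U : Type} (SS H : set (set U)) :
  (forall C, SS C -> sigma_gen H C) -> (exists C, H C) ->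
  prod_sigma SS SS (diagonal U) ->
  exists h : nat -> set U, (forall m, H (h m)) /\ separates h.
Proof.
  intros Hgen HH Hdiag.
  assert (Hcyl : exists R, cylinders H R).
  { destruct HH as [C HC]. exists (fun p => C (fst p)), C. auto. }
  destruct (Hdiag (countably_determined (cylinders H))) as [g [Hg Hd]].
  - now apply countably_determined_sigma_algebra.
  - intros R [A [B [HA [HB HR]]]].
    exact (rectangle_countably_determined SS H A B R Hgen HH HA HB HR).
  - destruct (choice (fun m B => H B /\
        (g m = (fun p => B (fst p)) \/ g m = (fun p => B (snd p)))) Hg) as [h Hh].
    exists h. split; [intro m; apply Hh|].
    intros x y Hxy.
    assert (Hg_xx_xy : forall m, g m (x, x) <-> g m (x, y)).
    { intro m. destruct (Hh m) as [_ [-> | ->]]; simpl; [tauto | apply Hxy]. }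
    now apply (Hd _ _ Hg_xx_xy).
Qed.

Record partition {U : Type} (H : set (set U)) (A : set U)
    (I : set nat) (C : nat -> set U) : Prop := {
  part_mem : forall k, I k -> H (C k);
  part_disjoint : forall k l, I k -> I l -> k <> l ->
    forall x, C k x -> C l x -> False;
  part_cover : forall x, A x <-> exists k, I k /\ C k x }.

Definition decides {U : Type} (B : set U) (I : set nat) (C : nat -> set U) : Prop :=
  forall k, I k -> (forall x, C k x -> B x) \/ (forall x, C k x -> ~ B x).

Definition refines {U : Type} (I' : set nat) (C' : nat -> set U)
    (I : set nat) (C : nat -> set U) : Prop :=
  forall p, I' p -> exists k, I k /\ forall x, C' p x -> C k x.

Lemma decides_refines {U : Type} (B : set U) I C I' (C' : nat -> set U) :
  decides B I C -> refines I' C' I C -> decides B I' C'.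
Proof.
  intros HB Href p Hp. destruct (Href p Hp) as [k [Hk Hsub]].
  destruct (HB k Hk) as [Hin | Hout]; [left | right]; intros x Hx; auto.
Qed.

Section Refinement.
(* Refining a partition of [A] by one set [B] of a semiring: each piece [C k]
   splits into [C k /\ B] and a finite disjoint decomposition [D k 0 .. D k (m k - 1)]
   of [C k \ B]; the new pieces are indexed by Cantor codes of pairs [(k, j)]. *)
Variables (U : Type) (H : set (set U)) (B A : set U) (I : set nat) (C : nat -> set U).
Variables (m : nat -> nat) (D : nat -> nat -> set U).
Hypothesis HB : H B.
Hypothesis HH_inter : forall X Y, H X -> H Y -> H (fun x => X x /\ Y x).
Hypothesis HP : partition H A I C.
Hypothesis HD_mem : forall k i, I k -> i < m k -> H (D k i).
Hypothesis HD_disjoint : forall k i i', I k -> i < m k -> i' < m k -> i <> i' ->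
  forall x, D k i x -> D k i' x -> False.
Hypothesis HD_cover : forall k x, I k ->
  ((C k x /\ ~ B x) <-> exists i, i < m k /\ D k i x).

Definition refined_piece (kj : nat * nat) : set U :=
  match snd kj with
  | 0 => fun x => C (fst kj) x /\ B x
  | S i => D (fst kj) i
  end.

Definition refined_index (kj : nat * nat) : Prop :=
  I (fst kj) /\ match snd kj with 0 => True | S i => i < m (fst kj) end.

Lemma refined_piece_sub kj x :
  refined_index kj -> refined_piece kj x -> C (fst kj) x /\
  (match snd kj with 0 => B x | S _ => ~ B x end).
Proof.
  unfold refined_index, refined_piece; destruct kj as [k [|i]]; simpl; intros [Hk Hi] Hx;
    [exact Hx | apply (HD_cover k x Hk); eauto].
Qed.

Lemma refined_piece_disjoint kj kj' x :
  refined_index kj -> refined_index kj' -> kj <> kj' ->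
  refined_piece kj x -> refined_piece kj' x -> False.
Proof.
  intros Hv Hv' Hne Hx Hx'.
  destruct (refined_piece_sub kj x Hv Hx) as [Hck HBk].
  destruct (refined_piece_sub kj' x Hv' Hx') as [Hck' HBk'].
  destruct kj as [k j], kj' as [k' j']; simpl in *.
  destruct (Nat.eq_dec k k') as [<- | Hkk'];
    [| exact (part_disjoint _ _ _ _ HP k k' (proj1 Hv) (proj1 Hv') Hkk' x Hck Hck')].
  destruct j as [|i], j' as [|i']; try tauto.
  assert (Hii' : i <> i') by (intros ->; exact (Hne eq_refl)).
  exact (HD_disjoint k i i' (proj1 Hv) (proj2 Hv) (proj2 Hv') Hii' x Hx Hx').
Qed.

Lemma refined_piece_cover k x :
  I k -> C k x -> exists j, refined_index (k, j) /\ refined_piece (k, j) x.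
Proof.
  intros Hk Hx. destruct (classic (B x)) as [Bx | nBx].
  - exists 0. unfold refined_index, refined_piece; simpl; auto.
  - destruct (proj1 (HD_cover k x Hk) (conj Hx nBx)) as [i [Hi Hix]].
    exists (S i). unfold refined_index, refined_piece; simpl; auto.
Qed.

Definition refined_I (p : nat) : Prop := refined_index (Cantor.of_nat p).
Definition refined_C (p : nat) : set U := refined_piece (Cantor.of_nat p).

Lemma refined_partition :
  partition H A refined_I refined_C /\ refines refined_I refined_C I C /\
  decides B refined_I refined_C.
Proof.
  unfold refined_I, refined_C. split; [split | split].
  - intros p.
    destruct (Cantor.of_nat p) as [k [|i]]; unfold refined_index, refined_piece; simpl.
    + intros [Hk _]. apply HH_inter; [apply (part_mem _ _ _ _ HP k Hk) | exact HB].
    + intros [Hk Hi]. auto.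
  - intros p q Hp Hq Hpq x. apply (refined_piece_disjoint _ _ x Hp Hq).
    intro E. apply Hpq. rewrite <- (Cantor.cancel_to_of p), <- (Cantor.cancel_to_of q).
    now rewrite E.
  - intro x. rewrite (part_cover _ _ _ _ HP x). split.
    + intros [k [Hk Hx]]. destruct (refined_piece_cover k x Hk Hx) as [j Hj].
      exists (Cantor.to_nat (k, j)). now rewrite Cantor.cancel_of_to.
    + intros [p [Hp Hx]]. exists (fst (Cantor.of_nat p)).
      split; [apply Hp | apply (refined_piece_sub _ x Hp Hx)].
  - intros p Hp. exists (fst (Cantor.of_nat p)).
    split; [apply Hp | intros x Hx; apply (refined_piece_sub _ x Hp Hx)].
  - intros p Hp. pose proof (refined_piece_sub (Cantor.of_nat p)) as Hsub.
    destruct (Cantor.of_nat p) as [k [|i]]; [left | right];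
      intros x Hx; exact (proj2 (Hsub x Hp Hx)).
Qed.

End Refinement.

Lemma partition_refine {U : Type} (H : set (set U)) (B A : set U)
    (I : set nat) (C : nat -> set U) :
  semiring H -> H B -> partition H A I C ->
  exists I' C', partition H A I' C' /\ refines I' C' I C /\ decides B I' C'.
Proof.
  intros [_ [Hinter Hdiff]] HB HP.
  destruct (choice (fun k (md : nat * (nat -> set U)) => I k ->
      (forall i, i < fst md -> H (snd md i)) /\
      (forall i i', i < fst md -> i' < fst md -> i <> i' ->
         forall x, snd md i x -> snd md i' x -> False) /\
      (forall x, (C k x /\ ~ B x) <-> exists i, i < fst md /\ snd md i x)))
    as [md Hmd].
  { intro k. destruct (classic (I k)) as [Hk | Hk].
    - destruct (Hdiff (C k) B (part_mem _ _ _ _ HP k Hk) HB) as [m [D HD]].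
      exists (m, D). auto.
    - exists (0, fun _ _ => False). tauto. }
  eexists; eexists.
  apply (refined_partition U H B A I C (fun k => fst (md k)) (fun k => snd (md k)));
    auto.
  - intros k i Hk. exact (proj1 (Hmd k Hk) i).
  - intros k i i' Hk. exact (proj1 (proj2 (Hmd k Hk)) i i').
  - intros k x Hk. exact (proj2 (proj2 (Hmd k Hk)) x).
Qed.

Lemma partition_levels {U : Type} (H : set (set U)) (A : set U) (h : nat -> set U) :
  semiring H -> H A -> (forall k, H (h k)) ->
  forall n, exists I C, partition H A I C /\ forall k, k < n -> decides (h k) I C.
Proof.
  intros Hsemi HA Hh n. induction n as [|n [I [C [HP Hdec]]]].
  - exists (fun k => k = 0), (fun _ => A). split; [split | intros; lia].
    + intros k _. exact HA.
    + intros k l -> -> Hkl. easy.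
    + intro x. split; [intro Hx; exists 0; auto | intros [_ [_ Hx]]; exact Hx].
  - destruct (partition_refine H (h n) A I C Hsemi (Hh n) HP)
      as [I' [C' [HP' [Href Hdec']]]].
    exists I', C'. split; [exact HP'|].
    intros k Hk. destruct (Nat.eq_dec k n) as [-> | Hkn]; [exact Hdec'|].
    apply (decides_refines _ I C); [apply Hdec; lia | exact Href].
Qed.

Lemma dissecting_of_levels {U : Type} (H : set (set U)) (A : set U)
    (h : nat -> set U) (I : nat -> set nat) (C : nat -> nat -> set U) :
  separates h ->
  (forall n, partition H A (I n) (C n)) ->
  (forall n k, k < n -> decides (h k) (I n) (C n)) ->
  dissecting_system I C A.
Proof.
  intros Hsep HP Hdec.
  split; [|split; [|split; [|split]]].
  - intros n. apply (part_disjoint _ _ _ _ (HP n)).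
  - intros n x Hx. apply (part_cover _ _ _ _ (HP (S n))), (part_cover _ _ _ _ (HP n)), Hx.
  - intros n k x Hk Hx. apply (part_cover _ _ _ _ (HP n)). eauto.
  - intros x Hx. exists 0. apply (part_cover _ _ _ _ (HP 0)), Hx.
  - intros x y Hx _ Hxy.
    assert (Hm : exists m, ~ (h m x <-> h m y)).
    { apply NNPP. intro Hnone. apply Hxy, Hsep. intro m.
      apply NNPP. intro Hm. apply Hnone. eauto. }
    destruct Hm as [m Hm]. exists (S m). intros n Hn.
    destruct (proj1 (part_cover _ _ _ _ (HP n) x) Hx) as [k [Hk Hkx]].
    exists k. split; [exact Hk|]. left. split; [exact Hkx|]. intro Hky.
    destruct (Hdec n m ltac:(lia) k Hk) as [Hin | Hout].
    + apply Hm. split; intros _; auto.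
    + apply Hm. split; intro Hc; exfalso; [exact (Hout x Hkx Hc) | exact (Hout y Hky Hc)].
Qed.

Theorem proposition2p8 (S : Type) (SS : set (set S)) (H : set (set S)) :
  sigma_algebra SS ->
  prod_sigma SS SS (diagonal S) ->
  (forall A, H A -> SS A) ->
  semiring H ->
  (forall A, sigma_gen H A <-> SS A) ->
  self_dissecting H.
Proof.
  intros _ Hdiag _ Hsemi Hgen.
  assert (Hempty : H (fun _ => False)) by apply Hsemi.
  destruct (separating_sequence SS H (fun A => proj2 (Hgen A))
              (ex_intro _ _ Hempty) Hdiag) as [h [Hh Hsep]].
  split; [exists (fun _ => False); exact Hempty|].
  intros A HA.
  destruct (choice (fun n (IC : set nat * (nat -> set S)) =>
      partition H A (fst IC) (snd IC) /\
      forall k, k < n -> decides (h k) (fst IC) (snd IC)))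
    as [L HL].
  { intro n. destruct (partition_levels H A h Hsemi HA Hh n) as [I [C HIC]].
    exists (I, C). exact HIC. }
  exists (fun n => fst (L n)), (fun n => snd (L n)). split.
  - apply (dissecting_of_levels H A h); [exact Hsep | apply HL | apply HL].
  - intros n k. apply (part_mem _ _ _ _ (proj1 (HL n))).
Qed.
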